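(* Let $X\subseteq\mathbb{R}^n$ be nonempty, closed, convex and bounded; let $F:X\to\mathbb{R}^n$ be $L_F$-Lipschitz and monotone on $X$; let $H:X\to\mathbb{R}^n$ be $L_H$-Lipschitz and $\mu_H$-strongly monotone on $X$; assume $\mathrm{SOL}(X,F)\neq\emptyset$. Let $\gamma>0$ and let $\{\eta_k\}$ be a nonincreasing positive sequence with $\gamma^2L_F^2+\gamma\eta_k\mu_H+\gamma^2\eta_k^2L_H^2\le0.5$ for all $k\ge0$. Let $x_0,\bar y_0\in X$, $\Gamma_0=0$, $\theta_0=\frac1{1-\gamma\eta_0\mu_H}$ and for $k\ge0$: $y_{k+1}=\Pi_X[x_k-\gamma(F(x_k)+\eta_kH(x_k))]$, $x_{k+1}=\Pi_X[x_k-\gamma(F(y_{k+1})+\eta_kH(y_{k+1}))]$, $\Gamma_{k+1}=\Gamma_k+\eta_k\theta_k$, $\bar y_{k+1}=\frac{\Gamma_k\bar y_k+\eta_k\theta_ky_{k+1}}{\Gamma_{k+1}}$, $\theta_{k+1}=\frac{\theta_k}{1-\gamma\eta_{k+1}\mu_H}$. Then: (i) For all $K\ge1$, $-B_H\,\mathrm{dist}(\bar y_K,\mathrm{SOL}(X,F))\le\mathrm{Gap}(\bar y_K,\mathrm{SOL}(X,F),H)\le\gamma^{-1}D_X^2\big/\sum_{j=0}^{K-1}\eta_j\theta_j$. (ii) For all $K\ge1$, $0\le\mathrm{Gap}(\bar y_K,X,F)\le\left(\gamma^{-1}\eta_0D_X^2+C_H\sqrt2\,D_X\sum_{j=0}^{K-1}\eta_j^2\theta_j\right)\big/\sum_{j=0}^{K-1}\eta_j\theta_j$.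 (iii) If $\sum_{j=0}^\infty\eta_j\theta_j=\infty$ and $\lim_{k\to\infty}\sum_{j=0}^k\eta_j^2\theta_j\big/\sum_{j=0}^k\eta_j\theta_j=0$, then $\{\bar y_k\}$ converges to the unique solution of the bilevel VI, i.e., the unique point of $\mathrm{SOL}(\mathrm{SOL}(X,F),H)$.
   Context: $\mathrm{SOL}(Y,G)=\{x\in Y: G(x)^\top(y-x)\ge0\ \forall y\in Y\}$. $\mathrm{Gap}(x,Y,G)=\sup_{y\in Y}G(y)^\top(x-y)$. $\Pi_X$ Euclidean projection; $\mathrm{dist}(x,Y)=\|x-\Pi_Y[x]\|$. $D_X^2=\sup_{x,y\in X}\frac12\|x-y\|^2$, $B_H=\sup_{x\in\mathrm{SOL}(X,F)}\|H(x)\|$, $C_H=\sup_{x\in X}\|H(x)\|$. $H$ is $\mu_H$-strongly monotone if $(H(x)-H(y))^\top(x-y)\ge\mu_H\|x-y\|^2$, $\mu_H>0$. *)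

From HB Require Import structures.
From mathcomp Require Import all_boot all_order all_algebra.
From mathcomp Require Import all_classical all_reals all_analysis.
Set Implicit Arguments. Unset Strict Implicit. Unset Printing Implicit Defensive.
Import Order.TTheory GRing.Theory Num.Theory.
Import numFieldNormedType.Exports.
Local Open Scope classical_set_scope.
Local Open Scope ring_scope.

Section Defs.
Context {R : realType} {n : nat}.
Notation vec := 'rV[R]_n.

Definition dot (u v : vec) : R := \sum_(i < n) u ord0 i * v ord0 i.
Definition enorm (u : vec) : R := Num.sqrt (dot u u).

Definition vi_convex_set (X : set vec) : Prop :=
  forall x y t, X x -> X y -> 0 <= t -> t <= 1 -> X (t *: x + (1 - t) *: y).
Definition vi_bounded_set (X : set vec) : Prop :=
  exists M : R, forall x, X x -> enorm x <= M.

Definition vi_lipschitz_on (X : set vec) (G : vec -> vec) (L : R) : Prop :=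
  forall x y, X x -> X y -> enorm (G x - G y) <= L * enorm (x - y).
Definition vi_monotone_on (X : set vec) (G : vec -> vec) : Prop :=
  forall x y, X x -> X y -> 0 <= dot (G x - G y) (x - y).
Definition vi_strongly_monotone_on (X : set vec) (G : vec -> vec) (mu : R) : Prop :=
  forall x y, X x -> X y -> mu * enorm (x - y) ^+ 2 <= dot (G x - G y) (x - y).

Definition is_proj (X : set vec) (x p : vec) : Prop :=
  X p /\ forall y, X y -> enorm (x - p) <= enorm (x - y).

Definition SOL (Y : set vec) (G : vec -> vec) : set vec :=
  [set x | Y x /\ forall y, Y y -> 0 <= dot (G x) (y - x)].

Definition Gap (x : vec) (Y : set vec) (G : vec -> vec) : R :=
  sup [set dot (G y) (x - y) | y in Y].

Definition dist (x : vec) (Y : set vec) : R :=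
  inf [set enorm (x - y) | y in Y].

Definition DX2 (X : set vec) : R :=
  sup [set enorm (x - y) ^+ 2 / 2 | x in X & y in X].
Definition DX (X : set vec) : R := Num.sqrt (DX2 X).
Definition BH (X : set vec) (F H : vec -> vec) : R :=
  sup [set enorm (H x) | x in SOL X F].
Definition CH (X : set vec) (H : vec -> vec) : R :=
  sup [set enorm (H x) | x in X].
End Defs.

From HB Require Import structures.
From mathcomp Require Import all_boot all_order all_algebra.
From mathcomp Require Import all_classical all_reals all_analysis.
From mathcomp Require Import ring lra.
Import Order.TTheory GRing.Theory Num.Theory.
Import numFieldNormedType.Exports.
Local Open Scope classical_set_scope.
Local Open Scope ring_scope.

(* One extragradient step on F + eta_k H, compared with any z in X, gives
     2 gamma (<F z, y_(k+1) - z> + eta_k <H z, y_(k+1) - z>)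
       <= (1 - gamma eta_k muH) |x_k - z|^2 - |x_(k+1) - z|^2
   by the obtuse-angle property of the projection, Lipschitz continuity, monotonicity of F
   and strong monotonicity of H.  The weights theta_k absorb the contraction factor, so
   after multiplying by theta_k (for z in SOL(X,F), where <F z, y - z> >= 0) or by
   eta_k theta_k (for z in X, where <H z, y - z> >= - C_H sqrt 2 D_X) the inequalities
   telescope.  Since ybar_K is the eta_k theta_k-weighted mean of the y_(k+1), this bounds
   <H z, ybar_K - z> and <F z, ybar_K - z>, hence the two gap functions.  Under the
   hypotheses of (iii) both bounds vanish, so by Minty's lemma every cluster point of
   (ybar_k) -- one exists since X is compact -- solves the bilevel problem, whose solution
   is unique by strong monotonicity of H; hence the whole sequence converges. *)

Section InnerProduct.
Context {R : realType} {n : nat}.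
Implicit Types (u v w : 'rV[R]_n) (a : R).

Lemma dotC u v : dot u v = dot v u.
Proof. by apply: eq_bigr => i _; rewrite mulrC. Qed.

Lemma dotDl u v w : dot (u + v) w = dot u w + dot v w.
Proof. by rewrite /dot -big_split; apply: eq_bigr => i _; rewrite !mxE mulrDl. Qed.

Lemma dotDr u v w : dot w (u + v) = dot w u + dot w v.
Proof. by rewrite dotC dotDl !(dotC w). Qed.

Lemma dotZl a u v : dot (a *: u) v = a * dot u v.
Proof. by rewrite /dot mulr_sumr; apply: eq_bigr => i _; rewrite !mxE mulrA. Qed.

Lemma dotZr a u v : dot u (a *: v) = a * dot u v.
Proof. by rewrite dotC dotZl dotC. Qed.

Lemma dotNl u v : dot (- u) v = - dot u v.
Proof. by rewrite -scaleN1r dotZl mulN1r. Qed.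

Lemma dotNr u v : dot u (- v) = - dot u v.
Proof. by rewrite dotC dotNl dotC. Qed.

Lemma dotBl u v w : dot (u - v) w = dot u w - dot v w.
Proof. by rewrite dotDl dotNl. Qed.

Lemma dotBr u v w : dot w (u - v) = dot w u - dot w v.
Proof. by rewrite dotDr dotNr. Qed.

Definition dotE := (dotBl, dotBr, dotDl, dotDr, dotNl, dotNr, dotZl, dotZr).

Lemma dot0r u : dot u 0 = 0.
Proof. by rewrite -(scale0r 0) dotZr mul0r. Qed.

Lemma dot_sumr (I : Type) (r : seq I) (P : pred I) (f : I -> 'rV[R]_n) u :
  dot u (\sum_(i <- r | P i) f i) = \sum_(i <- r | P i) dot u (f i).
Proof. exact: (big_morph _ (fun v w => dotDr v w u) (dot0r u)). Qed.

Lemma dotxx_ge0 u : 0 <= dot u u.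
Proof. by apply: sumr_ge0 => i _; rewrite -expr2 sqr_ge0. Qed.

Lemma dotxx_eq0 u : dot u u = 0 -> u = 0.
Proof.
move=> /eqP; rewrite psumr_eq0 => [/allP uu0|i _]; last by rewrite -expr2 sqr_ge0.
apply/rowP => i; rewrite mxE.
by have := uu0 i (mem_index_enum _); rewrite /= mulf_eq0 orbb => /eqP.
Qed.

Lemma sqr_enorm u : enorm u ^+ 2 = dot u u.
Proof. by rewrite sqr_sqrtr // dotxx_ge0. Qed.

Lemma enorm_ge0 u : 0 <= enorm u.
Proof. exact: sqrtr_ge0. Qed.

Lemma enormN u : enorm (- u) = enorm u.
Proof. by rewrite /enorm dotNl dotNr opprK. Qed.

Lemma enormBC u v : enorm (u - v) = enorm (v - u).
Proof. by rewrite -enormN opprB. Qed.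

Lemma enormZ a u : 0 <= a -> enorm (a *: u) = a * enorm u.
Proof.
move=> a0; rewrite /enorm dotZl dotZr mulrA -expr2 sqrtrM ?sqr_ge0 //.
by rewrite sqrtr_sqr ger0_norm.
Qed.

Lemma sqr_enormD_le u v : enorm (u + v) ^+ 2 <= 2 * enorm u ^+ 2 + 2 * enorm v ^+ 2.
Proof.
have := dotxx_ge0 (u - v).
by rewrite !sqr_enorm !dotE (dotC v u); lra.
Qed.

Lemma cauchy_schwarz u v : dot u v <= enorm u * enorm v.
Proof.
have [->|u0] := eqVneq u 0; first by rewrite dotC dot0r mulr_ge0 ?enorm_ge0.
have u_gt0 : 0 < enorm u.
  rewrite lt_def enorm_ge0 andbT; apply: contra_neq u0 => u_eq0.
  by apply: dotxx_eq0; rewrite -sqr_enorm u_eq0 expr0n.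
(* expand [0 <= | |u|^2 v - <u,v> u |^2] and divide by [|u|^2] *)
have := dotxx_ge0 (enorm u ^+ 2 *: v - dot u v *: u).
rewrite !dotE (dotC v u) -!sqr_enorm => h.
have {}h : (dot u v) ^+ 2 <= (enorm u * enorm v) ^+ 2.
  by rewrite -subr_ge0 -(pmulr_rge0 _ (exprn_gt0 2 u_gt0)); nra.
apply: le_trans (ler_norm _) _.
by rewrite -ler_sqr ?nnegrE ?mulr_ge0 ?enorm_ge0 // real_normK ?num_real.
Qed.

Lemma enormD_le u v : enorm (u + v) <= enorm u + enorm v.
Proof.
rewrite -ler_sqr ?nnegrE ?addr_ge0 ?enorm_ge0 // [X in X <= _]sqr_enorm.
rewrite dotDl !dotDr (dotC v u) -!sqr_enorm; have := cauchy_schwarz u v; lra.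
Qed.

Lemma cauchy_schwarzN u v : - (enorm u * enorm v) <= dot u v.
Proof. by rewrite lerNl -dotNl -(enormN u) cauchy_schwarz. Qed.

End InnerProduct.

Section Extragradient.
Context {R : realType} {n : nat}.
Implicit Types (X : set 'rV[R]_n) (u v w z : 'rV[R]_n).

Lemma is_proj_obtuse {X u p w} :
  vi_convex_set X -> is_proj X u p -> X w -> dot (u - p) (w - p) <= 0.
Proof.
move=> cX [Xp p_min] Xw; set a := u - p; set b := w - p.
rewrite leNgt; apply/negP; set d := dot a b => d0.
have s0 : 0 <= dot b b := dotxx_ge0 _.
(* moving from p towards w by t = d / (|b|^2 + d) strictly decreases the distance to u *)
set t := d / (dot b b + d).
have t0 : 0 < t by rewrite divr_gt0 // ltr_wpDl.
have t1 : t <= 1 by rewrite ler_pdivrMr ?ltr_wpDl // mul1r lerDr.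
have := p_min _ (cX _ _ t Xw Xp (ltW t0) t1).
rewrite -ler_sqr ?nnegrE ?enorm_ge0 // !sqr_enorm -/a.
have -> : u - (t *: w + (1 - t) *: p) = a - t *: b.
  by apply/rowP => i; rewrite !mxE; ring.
clearbody a b; rewrite !dotE (dotC b a) -/d => h.
have : t * dot b b < d by rewrite /t mulrAC ltr_pdivrMr ?ltr_wpDl //; nra.
nra.
Qed.

Lemma lipschitz_dot_le {X} {G : 'rV[R]_n -> 'rV[R]_n} {L u v} w :
  vi_lipschitz_on X G L -> X u -> X v -> dot (G u - G v) w <= L * enorm (u - v) * enorm w.
Proof.
move=> LG Xu Xv; apply: le_trans (cauchy_schwarz _ _) _.
by rewrite ler_wpM2r ?enorm_ge0 ?LG.
Qed.

Section Step.
Context {X : set 'rV[R]_n} {P : 'rV[R]_n -> 'rV[R]_n}.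
Hypotheses (cX : vi_convex_set X) (P_proj : forall v, is_proj X v (P v)).

Lemma proj_in v : X (P v).
Proof. by case: (P_proj v). Qed.

Lemma extragradient_three_point u z a b : X z ->
  enorm (P (u - b) - z) ^+ 2 <=
    enorm (u - z) ^+ 2 - enorm (u - P (u - a)) ^+ 2
    - enorm (P (u - a) - P (u - b)) ^+ 2
    + 2 * dot (a - b) (P (u - b) - P (u - a))
    - 2 * dot b (P (u - a) - z).
Proof.
move=> Xz; have := is_proj_obtuse cX (P_proj (u - b)) Xz.
have := is_proj_obtuse cX (P_proj (u - a)) (proj_in (u - b)).
set y := P (u - a); set u' := P (u - b).
rewrite !sqr_enorm !dotE (dotC z u') (dotC z u) (dotC y u) (dotC u' y); lra.
Qed.

Context {F H : 'rV[R]_n -> 'rV[R]_n} {LF LH mu g e : R}.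
Hypotheses (LipF : vi_lipschitz_on X F LF) (monF : vi_monotone_on X F).
Hypotheses (LipH : vi_lipschitz_on X H LH) (smH : vi_strongly_monotone_on X H mu).
Hypotheses (g0 : 0 <= g) (e0 : 0 <= e) (mu0 : 0 <= mu).
Hypothesis step_small : g ^+ 2 * LF ^+ 2 + g * e * mu + g ^+ 2 * e ^+ 2 * LH ^+ 2 <= 1 / 2.

Let T u v := g *: (F u + e *: H u) - g *: (F v + e *: H v).

Lemma extragradient_cross_le u v w : X u -> X v ->
  2 * dot (T u v) w <=
    (2 * g ^+ 2 * LF ^+ 2 + 2 * g ^+ 2 * e ^+ 2 * LH ^+ 2) * enorm (u - v) ^+ 2
    + enorm w ^+ 2.
Proof.
move=> Xu Xv; have -> : T u v = g *: ((F u - F v) + e *: (H u - H v)).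
  by apply/rowP => i; rewrite !mxE; ring.
have hF := lipschitz_dot_le w LipF Xu Xv; have hH := lipschitz_dot_le w LipH Xu Xv.
rewrite dotZl dotDl dotZl.
set r := enorm (u - v) in hF hH *; set s := enorm w in hF hH *.
have r0 : 0 <= r := enorm_ge0 _; have s0 : 0 <= s := enorm_ge0 _.
have : dot (F u - F v) w + e * dot (H u - H v) w <= (LF + e * LH) * r * s.
  by have := ler_wpM2l e0 hH; lra.
move=> /(ler_wpM2l g0) h.
(* AM-GM, then (LF + e LH)^2 <= 2 LF^2 + 2 e^2 LH^2 *)
have := sqr_ge0 (g * (LF + e * LH) * r - s); have := sqr_ge0 (g * (LF - e * LH) * r).
nra.
Qed.

Lemma extragradient_descent {x z y x'} : X x -> X z ->
  y = P (x - g *: (F x + e *: H x)) -> x' = P (x - g *: (F y + e *: H y)) ->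
  2 * g * (dot (F z) (y - z) + e * dot (H z) (y - z))
  <= (1 - g * e * mu) * enorm (x - z) ^+ 2 - enorm (x' - z) ^+ 2.
Proof.
move=> Xx Xz ey ex'.
have := extragradient_three_point x z (g *: (F x + e *: H x)) (g *: (F y + e *: H y)) Xz.
rewrite -ey -ex' -/(T x y) => three_point.
have Xy : X y by rewrite ey; apply: proj_in.
have cross := extragradient_cross_le x y (x' - y) Xx Xy.
have hF : dot (F z) (y - z) <= dot (F y) (y - z).
  by have := monF y z Xy Xz; rewrite dotBl subr_ge0.
have hH : dot (H z) (y - z) + mu * enorm (y - z) ^+ 2 <= dot (H y) (y - z).
  by have := smH y z Xy Xz; rewrite dotBl; lra.
have split_xz : enorm (x - z) ^+ 2 <= 2 * enorm (x - y) ^+ 2 + 2 * enorm (y - z) ^+ 2.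
  by have := sqr_enormD_le (x - y) (y - z); rewrite addrA subrK.
rewrite dotZl dotDl dotZl (enormBC y x') in three_point.
have := ler_wpM2l g0 hF; have := ler_wpM2l (mulr_ge0 g0 e0) hH.
have := ler_wpM2l (mulr_ge0 (mulr_ge0 g0 e0) mu0) split_xz.
have := ler_wpM2r (sqr_ge0 (enorm (x - y))) step_small.
lra.
Qed.

End Step.
End Extragradient.

Section WeightedSums.
Context {R : realType} {n : nat}.

Lemma weighted_telescope {s w c theta eta : nat -> R} :
  (forall k, w k <= (1 - c k) * s k - s k.+1) ->
  (forall k, 0 <= theta k) -> (forall k, 0 <= eta k) -> (forall k, eta k.+1 <= eta k) ->
  (forall k, 0 <= s k) ->
  theta 0%N * (1 - c 0%N) = 1 -> (forall k, theta k.+1 * (1 - c k.+1) = theta k) ->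
  forall K, \sum_(k < K.+1) eta k * theta k * w k <= eta 0%N * s 0%N - eta K * theta K * s K.+1.
Proof.
move=> hw theta0 eta0 etaD s0 theta_1 theta_S.
have step k :
    eta k * theta k * w k <= eta k * (theta k * (1 - c k)) * s k - eta k * theta k * s k.+1.
  by have := ler_wpM2l (mulr_ge0 (eta0 k) (theta0 k)) (hw k); rewrite mulrBr !mulrA.
elim=> [|K IH]; first by rewrite big_ord1; move: (step 0%N); rewrite theta_1 mulr1.
rewrite big_ord_recr /=; move: (step K.+1); rewrite theta_S.
have : eta K.+1 * theta K * s K.+1 <= eta K * theta K * s K.+1.
  by rewrite -!mulrA ler_wpM2r ?mulr_ge0.
lra.
Qed.

Section WeightedAverage.
Context {w Gamma : nat -> R} {y ybar : nat -> 'rV[R]_n}.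
Hypotheses (w_gt0 : forall k, 0 < w k) (Gamma_0 : Gamma 0%N = 0).
Hypothesis Gamma_S : forall k, Gamma k.+1 = Gamma k + w k.
Hypothesis ybar_S :
  forall k, ybar k.+1 = (Gamma k.+1)^-1 *: (Gamma k *: ybar k + w k *: y k.+1).

Lemma Gamma_sum K : Gamma K = \sum_(k < K) w k.
Proof.
by elim: K => [|K IH]; rewrite ?Gamma_0 ?big_ord0 // big_ord_recr /= Gamma_S IH.
Qed.

Lemma Gamma_ge0 K : 0 <= Gamma K.
Proof. by rewrite Gamma_sum sumr_ge0 // => k _; apply: ltW. Qed.

Lemma Gamma_gt0 K : 0 < Gamma K.+1.
Proof. by rewrite Gamma_S ltr_wpDl ?Gamma_ge0. Qed.

Lemma scale_ybar_sum K : Gamma K *: ybar K = \sum_(k < K) w k *: y k.+1.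
Proof.
elim: K => [|K IH]; first by rewrite Gamma_0 scale0r big_ord0.
by rewrite ybar_S scalerA divff ?gt_eqF ?Gamma_gt0 // scale1r big_ord_recr /= IH.
Qed.

Lemma ybar_in {X : set 'rV[R]_n} : vi_convex_set X ->
  X (ybar 0%N) -> (forall k, X (y k.+1)) -> forall K, X (ybar K).
Proof.
move=> cX X0 Xy; elim=> [//|K IH].
have G0 := Gamma_gt0 K.
rewrite ybar_S scalerDr !scalerA.
have -> : (Gamma K.+1)^-1 * w K = 1 - (Gamma K.+1)^-1 * Gamma K.
  by rewrite Gamma_S; field; rewrite -Gamma_S gt_eqF.
apply: cX; [exact: IH | exact: Xy | by rewrite mulr_ge0 ?invr_ge0 ?Gamma_ge0 |].
by rewrite mulrC ler_pdivrMr // mul1r Gamma_S lerDl ltW.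
Qed.

Lemma dot_ybar v z K :
  dot v (ybar K.+1 - z) = (\sum_(k < K.+1) w k * dot v (y k.+1 - z)) / Gamma K.+1.
Proof.
have : Gamma K.+1 * dot v (ybar K.+1 - z) = \sum_(k < K.+1) w k * dot v (y k.+1 - z).
  rewrite -dotZr scalerBr scale_ybar_sum {1}Gamma_sum scaler_suml -sumrB dot_sumr.
  by apply: eq_bigr => k _; rewrite -scalerBr dotZr.
by move=> <-; rewrite mulrC mulKf ?gt_eqF ?Gamma_gt0.
Qed.

End WeightedAverage.
End WeightedSums.

Section Compactness.
Context {R : realType} {n : nat}.
Implicit Types (v : 'rV[R]_n) (X : set 'rV[R]_n).

Lemma mx_norm_le_enorm v : `|v| <= enorm v.
Proof.
rewrite [`|v|]mx_normrE; apply: bigmax_le => [|[i j] _]; first exact: enorm_ge0.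
rewrite (ord1 i) /enorm -sqrtr_sqr; apply: ler_wsqrtr.
by rewrite /dot (bigD1 j) //= -expr2 lerDl sumr_ge0 // => k _; rewrite -expr2 sqr_ge0.
Qed.

Lemma sqr_enorm_le_mx_norm v : enorm v ^+ 2 <= n%:R * `|v| ^+ 2.
Proof.
have -> : n%:R * `|v| ^+ 2 = \sum_(i < n) `|v| ^+ 2 by rewrite sumr_const card_ord mulr_natl.
rewrite sqr_enorm; apply: ler_sum => i _.
rewrite -expr2 -real_normK ?num_real // lerXn2r ?nnegrE //.
rewrite [`|v|]mx_normrE.
exact: (@le_bigmax _ _ _ 0 (fun ij : 'I_1 * 'I_n => `|v ij.1 ij.2|) (ord0, i)).
Qed.

Lemma enorm_lt_of_mx_norm v d : 0 < d -> `|v| < d / (n%:R + 1) -> enorm v < d.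
Proof.
move=> d0 hv; have n1 : 0 < n%:R + 1 :> R by rewrite ltr_wpDl.
have v0 : 0 <= `|v| by [].
rewrite -ltr_sqr ?nnegrE ?enorm_ge0 ?ltW //.
apply: le_lt_trans (sqr_enorm_le_mx_norm v) _.
move: hv; rewrite ltr_pdivlMr // -ltr_sqr ?nnegrE ?mulr_ge0 ?(ltW d0) ?(ltW n1) //.
have : 0 <= n%:R :> R by []; nra.
Qed.

Lemma cluster_along {X} {u : nat -> 'rV[R]_n} (B : nat -> Prop) :
  closed X -> vi_bounded_set X -> (forall k, X (u k)) ->
  (forall N, exists2 k, (N <= k)%N & B k) ->
  exists2 p, X p & forall d, 0 < d -> forall N,
    exists k, [/\ (N <= k)%N, B k & enorm (u k - p) < d].
Proof.
move=> clX [M bM] Xu hB.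
have cpX : compact X.
  apply: bounded_closed_compact clX; exists M; split; first exact: num_real.
  by move=> M' hM' v Xv; apply: le_trans (mx_norm_le_enorm v) (le_trans (bM _ Xv) (ltW hM')).
(* the events [B k], [k -> oo], form a proper filter, which clusters in the compact X *)
pose FB := fun A : set 'rV[R]_n => exists N, forall k, (N <= k)%N -> B k -> A (u k).
have FB_proper : ProperFilter FB.
  split; first by move=> [N hN]; have [k Nk Bk] := hB N; exact: hN k Nk Bk.
  split; first by exists 0%N.
    move=> A1 A2 [N1 h1] [N2 h2]; exists (maxn N1 N2) => k.
    by rewrite geq_max => /andP[k1 k2] Bk; split; [apply: h1 | apply: h2].
  by move=> A1 A2 sA [N h]; exists N => k Nk Bk; apply/sA/h.
have [p [Xp p_cl]] := cpX FB FB_proper (ex_intro _ 0%N (fun k _ _ => Xu k)).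
exists p => // d d0 N.
have FB_tail : FB [set v | exists k, [/\ (N <= k)%N, B k & v = u k]].
  by exists N => k Nk Bk; exists k.
have near_p : nbhs p [set v | enorm (v - p) < d].
  apply/nbhs_ballP; exists (d / (n%:R + 1)); first by rewrite /= divr_gt0 // ltr_wpDl.
  move=> v; rewrite -ball_normE /= => hv.
  by apply: enorm_lt_of_mx_norm => //; rewrite -normrN opprB.
by have [_ [[k [Nk Bk ->]] hk]] := p_cl _ _ FB_tail near_p; exists k.
Qed.

End Compactness.

Section VariationalInequalities.
Context {R : realType} {n : nat}.
Implicit Types (X Y : set 'rV[R]_n) (G : 'rV[R]_n -> 'rV[R]_n) (v z p q : 'rV[R]_n).

Lemma ge0_of_ge_opp_scaled (K c : R) :
  (forall t, 0 < t -> t <= 1 -> - (t * K) <= c) -> 0 <= c.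
Proof.
move=> h; rewrite leNgt; apply/negP => c0.
have Kc : 0 < `|K| - c by rewrite subr_gt0 (lt_le_trans c0).
set t := - c / (`|K| - c).
have t0 : 0 < t by rewrite divr_gt0 // oppr_gt0.
have t1 : t <= 1 by rewrite ler_pdivrMr // mul1r; have := normr_ge0 K; lra.
have := h t t0 t1; have := ler_wpM2l (ltW t0) (ler_norm K).
have : t * `|K| < - c by rewrite /t mulrAC ltr_pdivrMr //; nra.
lra.
Qed.

Lemma minty_SOL {Y G L p} : vi_convex_set Y -> vi_lipschitz_on Y G L -> Y p ->
  (forall z, Y z -> dot (G z) (p - z) <= 0) -> SOL Y G p.
Proof.
move=> cY LG Yp h; split => // z Yz.
apply: (@ge0_of_ge_opp_scaled (L * enorm (z - p) ^+ 2)) => t t0 t1.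
have Yw := cY _ _ t Yz Yp (ltW t0) t1; set w := _ + _ in Yw.
have ew : w - p = t *: (z - p) by apply/rowP => i; rewrite !mxE; ring.
have h1 : 0 <= dot (G w) (z - p).
  by have := h w Yw; rewrite -opprB ew dotNr dotZr oppr_le0 pmulr_rge0.
have h2 : dot (G w - G p) (z - p) <= t * (L * enorm (z - p) ^+ 2).
  apply: le_trans (lipschitz_dot_le (z - p) LG Yw Yp) _.
  by rewrite ew enormZ ?(ltW t0) // expr2 !mulrA (mulrC L t) lexx.
by move: h2; rewrite dotBl; lra.
Qed.

Lemma lipschitz_on_sub {X Y G L} :
  Y `<=` X -> vi_lipschitz_on X G L -> vi_lipschitz_on Y G L.
Proof. by move=> sYX LG u v Yu Yv; apply: LG; apply: sYX. Qed.

Lemma SOL_convex {X G L} :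
  vi_convex_set X -> vi_lipschitz_on X G L -> vi_monotone_on X G -> vi_convex_set (SOL X G).
Proof.
move=> cX LG mG y1 y2 t [X1 h1] [X2 h2] t0 t1.
apply: (minty_SOL cX LG (cX _ _ t X1 X2 t0 t1)) => z Xz.
have sol_minty yi : X yi -> (forall y, X y -> 0 <= dot (G yi) (y - yi)) -> dot (G z) (yi - z) <= 0.
  move=> Xi hi; have := mG z yi Xz Xi; have := hi z Xz.
  by rewrite dotBl -[yi - z]opprB dotNr; lra.
have -> : t *: y1 + (1 - t) *: y2 - z = t *: (y1 - z) + (1 - t) *: (y2 - z).
  by apply/rowP => i; rewrite !mxE; ring.
rewrite dotDr !dotZr; have := sol_minty _ X1 h1; have := sol_minty _ X2 h2; nra.
Qed.

Lemma SOL_strongly_monotone_unique {X Y G mu p q} :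
  Y `<=` X -> vi_strongly_monotone_on X G mu -> 0 < mu ->
  SOL Y G p -> SOL Y G q -> p = q.
Proof.
move=> sYX smG mu0 [Yp hp] [Yq hq].
have := smG p q (sYX _ Yp) (sYX _ Yq); have := hp q Yq; have := hq p Yp.
rewrite dotBl -(opprB p q) dotNr => a b c.
have : mu * enorm (p - q) ^+ 2 <= 0 by lra.
rewrite pmulr_rle0 // sqr_enorm => pq0; apply/eqP; rewrite -subr_eq0; apply/eqP.
by apply: dotxx_eq0; apply/eqP; rewrite eq_le pq0 dotxx_ge0.
Qed.

Lemma dot_le0_of_approx v z p :
  (forall d, 0 < d -> exists2 q, dot v (q - z) <= d & enorm (q - p) < d) ->
  dot v (p - z) <= 0.
Proof.
move=> h; apply/ler_addgt0Pr => e e0; rewrite add0r.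
have v1 : 0 < 1 + enorm v by rewrite ltr_pwDl ?enorm_ge0.
set d := e / (1 + enorm v); have ed : e = d * (1 + enorm v) by rewrite divfK ?gt_eqF.
have [q h1 h2] := h d (divr_gt0 e0 v1).
have -> : p - z = (q - z) + (p - q) by rewrite [RHS]addrC addrA subrK.
rewrite dotDr; have := cauchy_schwarz v (p - q); rewrite enormBC.
have := ler_wpM2l (enorm_ge0 v) (ltW h2).
lra.
Qed.

Section BilevelLimit.
Context {X : set 'rV[R]_n} {F H : 'rV[R]_n -> 'rV[R]_n} {LF LH mu : R}.
Hypotheses (clX : closed X) (cX : vi_convex_set X) (bX : vi_bounded_set X).
Hypotheses (LipF : vi_lipschitz_on X F LF) (monF : vi_monotone_on X F).
Hypotheses (LipH : vi_lipschitz_on X H LH) (smH : vi_strongly_monotone_on X H mu).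
Hypothesis mu_gt0 : 0 < mu.
Context {u : nat -> 'rV[R]_n} {e1 e2 : nat -> R}.
Hypothesis u_in : forall k, X (u k).
Hypothesis F_residual : forall k z, X z -> dot (F z) (u k - z) <= e1 k.
Hypothesis H_residual : forall k z, SOL X F z -> dot (H z) (u k - z) <= e2 k.
Hypotheses (e1_cvg0 : e1 @ \oo --> 0) (e2_cvg0 : e2 @ \oo --> 0).

Lemma bilevel_SOL_of_cluster p : X p ->
  (forall d, 0 < d -> forall N, exists k, (N <= k)%N /\ enorm (u k - p) < d) ->
  SOL (SOL X F) H p.
Proof.
move=> Xp p_cl.
have approx (e : nat -> R) v z : e @ \oo --> 0 -> (forall k, dot v (u k - z) <= e k) ->
    dot v (p - z) <= 0.
  move=> e_cvg0 he; apply: dot_le0_of_approx => d d0.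
  have [N _ hN] := cvgr_lt _ e_cvg0 _ d0.
  have [k [Nk hk]] := p_cl d d0 N.
  by exists (u k) => //; apply: le_trans (he k) (ltW (hN k Nk)).
have SOL_p : SOL X F p.
  by apply: (minty_SOL cX LipF Xp) => z Xz; apply: (approx e1) => // k; apply: F_residual.
have sSX : SOL X F `<=` X by move=> z [].
apply: (minty_SOL (SOL_convex cX LipF monF) (lipschitz_on_sub sSX LipH) SOL_p) => z Sz.
by apply: (approx e2) => // k; apply: H_residual.
Qed.

Lemma bilevel_limit :
  exists xs, SOL (SOL X F) H = [set xs] /\ (fun k => enorm (u k - xs)) @ \oo --> 0.
Proof.
have [p Xp p_cl] := cluster_along (fun=> True) clX bX u_in (fun N => ex_intro2 _ _ N (leqnn N) I).
have S_p : SOL (SOL X F) H p.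
  apply: bilevel_SOL_of_cluster => // d d0 N.
  by have [k [Nk _ hk]] := p_cl d d0 N; exists k.
have uniq q : SOL (SOL X F) H q -> q = p.
  by move=> S_q; apply: (SOL_strongly_monotone_unique _ smH mu_gt0 S_q S_p) => z [].
exists p; split; first by apply/seteqP; split => q /=; [exact: uniq | move=> ->].
(* a subsequence staying eps away from p would cluster at another bilevel solution *)
apply/cvgr0Pnorm_lt => eps eps0; apply: contrapT => not_near.
have far N : exists2 k, (N <= k)%N & eps <= enorm (u k - p).
  apply: contrapT => hN; apply: not_near; exists N => // k /= Nk.
  by rewrite ger0_norm ?enorm_ge0 // ltNge; apply/negP => hk; apply: hN; exists k.
have [q Xq q_cl] := cluster_along _ clX bX u_in far.
have S_q : SOL (SOL X F) H q.
  apply: bilevel_SOL_of_cluster => // d d0 N.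
  by have [k [Nk _ hk]] := q_cl d d0 N; exists k.
have [k [_ far_k near_k]] := q_cl eps eps0 0%N.
by move: near_k; rewrite (uniq q S_q) ltNge far_k.
Qed.

End BilevelLimit.

End VariationalInequalities.

Section GapBounds.
Context {R : realType} {n : nat}.
Implicit Types (X Y : set 'rV[R]_n) (G : 'rV[R]_n -> 'rV[R]_n) (p : 'rV[R]_n).

Lemma le_sup_image {Y} {f : 'rV[R]_n -> R} {B z} :
  (forall y, Y y -> f y <= B) -> Y z -> f z <= sup [set f y | y in Y].
Proof.
move=> hB Yz; apply: ub_le_sup; last by exists z.
by exists B => _ [y Yy <-]; apply: hB.
Qed.

Lemma sup_image_le {Y} {f : 'rV[R]_n -> R} {B} :
  Y !=set0 -> (forall y, Y y -> f y <= B) -> sup [set f y | y in Y] <= B.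
Proof.
move=> [z Yz] hB; apply: ge_sup; first by exists (f z), z.
by move=> _ [y Yy <-]; apply: hB.
Qed.

Lemma Gap_ge0 {Y G p U} : Y p -> (forall y, Y y -> dot (G y) (p - y) <= U) -> 0 <= Gap p Y G.
Proof.
by move=> Yp hU; have := le_sup_image hU Yp; rewrite subrr dot0r.
Qed.

Lemma Gap_ge_opp_dist {Y G p U B} : Y !=set0 ->
  (forall y, Y y -> enorm (G y) <= B) -> (forall y, Y y -> dot (G y) (p - y) <= U) ->
  - sup [set enorm (G y) | y in Y] * dist p Y <= Gap p Y G.
Proof.
move=> [y0 Yy0] hB hU; set S := sup _.
have S0 : 0 <= S := le_trans (enorm_ge0 _) (le_sup_image hB Yy0).
rewrite mulNr; apply/ler_addgt0Pr => e e0.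
have S1 : 0 < S + 1 by rewrite ltr_wpDl.
have dist_inf : has_inf [set enorm (p - y) | y in Y].
  by split; [exists (enorm (p - y0)), y0 | exists 0 => _ [y _ <-]; apply: enorm_ge0].
have [_ [y Yy <-] hy] := inf_adherent (divr_gt0 e0 S1) dist_inf.
have := cauchy_schwarzN (G y) (p - y); have := le_sup_image hU Yy.
have := ler_wpM2r (enorm_ge0 (p - y)) (le_sup_image hB Yy).
have := ler_wpM2l S0 (ltW hy); rewrite -/(dist p Y) -/S -/(Gap p Y G).
have : S * (e / (S + 1)) <= e.
  by rewrite mulrCA ger_pMr // ler_pdivrMr // mul1r lerDl.
lra.
Qed.

Lemma sqr_enormB_le_DX2 {X a b} : vi_bounded_set X -> X a -> X b ->
  enorm (a - b) ^+ 2 <= 2 * DX2 X.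
Proof.
move=> [M bM] Xa Xb.
have sqr_le c d : X c -> X d -> enorm (c - d) ^+ 2 <= 4 * M ^+ 2.
  move=> Xc Xd; apply: le_trans (sqr_enormD_le _ _) _; rewrite enormN.
  have sqr_bound v : X v -> enorm v ^+ 2 <= M ^+ 2.
    by move=> Xv; rewrite lerXn2r ?nnegrE ?enorm_ge0 ?bM // (le_trans (enorm_ge0 _) (bM _ Xv)).
  by have := sqr_bound _ Xc; have := sqr_bound _ Xd; lra.
have : enorm (a - b) ^+ 2 / 2 <= DX2 X.
  apply: ub_le_sup; last by exists a => //; exists b.
  exists (4 * M ^+ 2 / 2) => _ [c Xc [d Xd <-]].
  by rewrite ler_pM2r ?sqr_le.
lra.
Qed.

Lemma enormB_le_DX {X a b} : vi_bounded_set X -> X a -> X b ->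
  enorm (a - b) <= Num.sqrt 2 * DX X.
Proof.
move=> bX Xa Xb.
have D0 : 0 <= 2 * DX2 X := le_trans (sqr_ge0 _) (sqr_enormB_le_DX2 bX Xa Xa).
rewrite /DX -sqrtrM // -ler_sqr ?nnegrE ?enorm_ge0 ?sqrtr_ge0 // (sqr_sqrtr D0).
exact: sqr_enormB_le_DX2.
Qed.

Lemma lipschitz_bounded {X G L} : vi_bounded_set X -> X !=set0 -> vi_lipschitz_on X G L ->
  exists B, forall x, X x -> enorm (G x) <= B.
Proof.
move=> bX [x0 Xx0] LG; exists (`|L| * (Num.sqrt 2 * DX X) + enorm (G x0)) => x Xx.
have -> : G x = (G x - G x0) + G x0 by rewrite subrK.
apply: le_trans (enormD_le _ _) _; rewrite lerD2r; apply: le_trans (LG _ _ Xx Xx0) _.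
apply: le_trans (ler_wpM2r (enorm_ge0 _) (ler_norm L)) _.
by rewrite ler_wpM2l ?enormB_le_DX.
Qed.

End GapBounds.

Section Limits.
Context {R : realType}.
Context {S : nat -> R}.
Hypothesis S_cvgy : S @ \oo --> +oo.

Lemma cvg0_divy A : (fun k => A / S k) @ \oo --> 0.
Proof.
have S_gt0 : \forall k \near \oo, 0 < S k by apply: (proj1 (cvgryPgt S) S_cvgy).
have invS0 : (fun k => (S k)^-1) @ \oo --> 0 by apply: (proj2 (gtr0_cvgV0 S_gt0) S_cvgy).
by have := cvgM (cvg_cst A) invS0; rewrite mulr0; exact.
Qed.

Lemma cvg0_affine_divy (Q : nat -> R) A C : (fun k => Q k / S k) @ \oo --> 0 ->
  (fun k => (A + C * Q k) / S k) @ \oo --> 0.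
Proof.
move=> QS0; have -> : (fun k => (A + C * Q k) / S k) = (fun k => A / S k + C * (Q k / S k)).
  by apply/funext => k; rewrite mulrDl mulrA.
by have := cvgD (cvg0_divy A) (cvgM (cvg_cst C) QS0); rewrite mulr0 addr0; exact.
Qed.

End Limits.

Section BilevelExtragradient.
Context {R : realType} {n : nat}.
Context {X : set 'rV[R]_n} {F H : 'rV[R]_n -> 'rV[R]_n} {LF LH muH gamma : R}.
Context {eta : nat -> R} {P : 'rV[R]_n -> 'rV[R]_n}.
Context {x y ybar : nat -> 'rV[R]_n} {Gamma theta : nat -> R}.
Hypotheses (X0 : X !=set0) (clX : closed X) (cX : vi_convex_set X) (bX : vi_bounded_set X).
Hypotheses (LipF : vi_lipschitz_on X F LF) (monF : vi_monotone_on X F).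
Hypotheses (LipH : vi_lipschitz_on X H LH) (smH : vi_strongly_monotone_on X H muH).
Hypotheses (muH_gt0 : 0 < muH) (SOL0 : SOL X F !=set0).
Hypothesis step_small : forall k,
  gamma ^+ 2 * LF ^+ 2 + gamma * eta k * muH + gamma ^+ 2 * eta k ^+ 2 * LH ^+ 2 <= 1 / 2.
Hypotheses (gamma_gt0 : 0 < gamma) (eta_gt0 : forall k, 0 < eta k).
Hypothesis eta_decr : forall k, eta k.+1 <= eta k.
Hypothesis P_proj : forall z, is_proj X z (P z).
Hypothesis y_S : forall k, y k.+1 = P (x k - gamma *: (F (x k) + eta k *: H (x k))).
Hypothesis x_S : forall k, x k.+1 = P (x k - gamma *: (F (y k.+1) + eta k *: H (y k.+1))).
Hypotheses (x0_in : X (x 0%N)) (ybar0_in : X (ybar 0%N)).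
Hypothesis Gamma_S : forall k, Gamma k.+1 = Gamma k + eta k * theta k.
Hypothesis Gamma_0 : Gamma 0%N = 0.
Hypothesis ybar_S : forall k,
  ybar k.+1 = (Gamma k.+1)^-1 *: (Gamma k *: ybar k + (eta k * theta k) *: y k.+1).
Hypothesis theta_0 : theta 0%N = 1 / (1 - gamma * eta 0%N * muH).
Hypothesis theta_S : forall k, theta k.+1 = theta k / (1 - gamma * eta k.+1 * muH).

Lemma x_in k : X (x k).
Proof. by elim: k => [//|k _]; rewrite x_S; apply: (proj_in P_proj). Qed.

Lemma y_in k : X (y k.+1).
Proof. by rewrite y_S; apply: (proj_in P_proj). Qed.

Lemma contraction_gt0 k : 0 < 1 - gamma * eta k * muH.
Proof.
have := step_small k; have := sqr_ge0 (gamma * LF); have := sqr_ge0 (gamma * eta k * LH).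
rewrite !exprMn; lra.
Qed.

Lemma theta_gt0 k : 0 < theta k.
Proof.
elim: k => [|k IH]; rewrite ?theta_0 ?theta_S divr_gt0 //; exact: contraction_gt0.
Qed.

Lemma theta_contraction_0 : theta 0%N * (1 - gamma * eta 0%N * muH) = 1.
Proof. by rewrite theta_0 mul1r mulVf // gt_eqF // contraction_gt0. Qed.

Lemma theta_contraction_S k : theta k.+1 * (1 - gamma * eta k.+1 * muH) = theta k.
Proof. by rewrite theta_S divfK // gt_eqF // contraction_gt0. Qed.

Lemma weight_gt0 k : 0 < eta k * theta k.
Proof. by rewrite mulr_gt0 ?theta_gt0. Qed.

Lemma iterate_descent z k : X z ->
  2 * gamma * (dot (F z) (y k.+1 - z) + eta k * dot (H z) (y k.+1 - z))
  <= (1 - gamma * eta k * muH) * enorm (x k - z) ^+ 2 - enorm (x k.+1 - z) ^+ 2.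
Proof.
move=> Xz; exact: (extragradient_descent cX P_proj LipF monF LipH smH (ltW gamma_gt0)
  (ltW (eta_gt0 k)) (ltW muH_gt0) (step_small k) (x_in k) Xz (y_S k) (x_S k)).
Qed.

Lemma ybar_in_X K : X (ybar K).
Proof. exact: (ybar_in weight_gt0 Gamma_0 Gamma_S ybar_S cX ybar0_in y_in). Qed.

Lemma dot_ybar_le v z A K :
  \sum_(k < K.+1) eta k * theta k * dot v (y k.+1 - z) <= A ->
  dot v (ybar K.+1 - z) <= A / \sum_(k < K.+1) eta k * theta k.
Proof.
rewrite (dot_ybar weight_gt0 Gamma_0 Gamma_S ybar_S) (Gamma_sum Gamma_0 Gamma_S).
by move=> hA; rewrite ler_wpM2r // invr_ge0 sumr_ge0 // => k _; rewrite ltW ?weight_gt0.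
Qed.

Lemma SOL_residual_le z K : SOL X F z ->
  dot (H z) (ybar K.+1 - z) <= gamma^-1 * DX2 X / \sum_(j < K.+1) eta j * theta j.
Proof.
move=> [Xz z_sol]; apply: dot_ybar_le.
rewrite -(ler_pM2l gamma_gt0) mulrA mulfV ?gt_eqF // mul1r.
have := weighted_telescope (fun k => iterate_descent z k Xz) (fun k => ltW (theta_gt0 k))
  (fun=> ler01) (fun=> lexx 1) (fun k => sqr_ge0 _) theta_contraction_0 theta_contraction_S K.
(* the F-part of each summand is nonnegative since z solves VI(X, F) *)
have drop_F (k : 'I_K.+1) : 2 * gamma * (eta k * theta k * dot (H z) (y k.+1 - z)) <=
    1 * theta k * (2 * gamma * (dot (F z) (y k.+1 - z) + eta k * dot (H z) (y k.+1 - z))).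
  by have := z_sol _ (y_in k); have := mulr_gt0 gamma_gt0 (theta_gt0 k); nra.
have := ler_sum (index_enum _) (fun k (_ : true) => drop_F k); rewrite -mulr_sumr.
have := sqr_enormB_le_DX2 bX x0_in Xz.
have := mulr_ge0 (ltW (theta_gt0 K)) (sqr_ge0 (enorm (x K.+1 - z))); lra.
Qed.

Lemma H_le_CH z : X z -> enorm (H z) <= CH X H.
Proof. by have [B hB] := lipschitz_bounded bX X0 LipH; apply: le_sup_image hB. Qed.

Lemma X_residual_le z K : X z ->
  dot (F z) (ybar K.+1 - z) <=
    (gamma^-1 * eta 0%N * DX2 X
     + CH X H * Num.sqrt 2 * DX X * (\sum_(j < K.+1) eta j ^+ 2 * theta j))
    / \sum_(j < K.+1) eta j * theta j.
Proof.
move=> Xz; apply: dot_ybar_le; set CM := CH X H * Num.sqrt 2 * DX X.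
rewrite -(ler_pM2l gamma_gt0) mulrDr !mulrA mulfV ?gt_eqF // mul1r.
have := weighted_telescope (fun k => iterate_descent z k Xz) (fun k => ltW (theta_gt0 k))
  (fun k => ltW (eta_gt0 k)) eta_decr (fun k => sqr_ge0 _)
  theta_contraction_0 theta_contraction_S K.
have H_ge k : - CM <= dot (H z) (y k.+1 - z).
  apply: le_trans (cauchy_schwarzN _ _); rewrite lerN2 /CM -mulrA.
  apply: ler_pM; rewrite ?enorm_ge0 //; [exact: H_le_CH | exact: enormB_le_DX bX (y_in k) Xz].
have bound_H (k : 'I_K.+1) : 2 * gamma * (eta k * theta k * dot (F z) (y k.+1 - z))
    - 2 * gamma * CM * (eta k ^+ 2 * theta k) <= eta k * theta k *
    (2 * gamma * (dot (F z) (y k.+1 - z) + eta k * dot (H z) (y k.+1 - z))).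
  have := H_ge k; have := mulr_gt0 (mulr_gt0 gamma_gt0 (weight_gt0 k)) (eta_gt0 k); nra.
have := ler_sum (index_enum _) (fun k (_ : true) => bound_H k); rewrite sumrB -!mulr_sumr.
have := ler_wpM2l (ltW (eta_gt0 0%N)) (sqr_enormB_le_DX2 bX x0_in Xz).
have := mulr_ge0 (ltW (weight_gt0 K)) (sqr_ge0 (enorm (x K.+1 - z))).
rewrite /CM; lra.
Qed.

Lemma SOL_gap_bounds K : (1 <= K)%N ->
  - BH X F H * dist (ybar K) (SOL X F) <= Gap (ybar K) (SOL X F) H /\
  Gap (ybar K) (SOL X F) H <= gamma^-1 * DX2 X / (\sum_(j < K) eta j * theta j).
Proof.
case: K => [//|K] _; have [B hB] := lipschitz_bounded bX X0 LipH.
split; first exact: Gap_ge_opp_dist SOL0 (fun z Sz => hB z Sz.1) (SOL_residual_le ^~ K).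
exact: sup_image_le SOL0 (SOL_residual_le ^~ K).
Qed.

Lemma X_gap_bounds K : (1 <= K)%N ->
  0 <= Gap (ybar K) X F /\
  Gap (ybar K) X F
    <= (gamma^-1 * eta 0%N * DX2 X
        + CH X H * Num.sqrt 2 * DX X * (\sum_(j < K) eta j ^+ 2 * theta j))
       / (\sum_(j < K) eta j * theta j).
Proof.
case: K => [//|K] _; split; first exact: Gap_ge0 (ybar_in_X _) (X_residual_le ^~ K).
exact: sup_image_le X0 (X_residual_le ^~ K).
Qed.

Lemma ybar_cvg_bilevel_SOL :
  (fun k => \sum_(j < k.+1) eta j * theta j) @ \oo --> +oo ->
  (fun k => (\sum_(j < k.+1) eta j ^+ 2 * theta j) / (\sum_(j < k.+1) eta j * theta j))
    @ \oo --> 0 ->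
  exists xs, SOL (SOL X F) H = [set xs] /\ (fun k => enorm (ybar k - xs)) @ \oo --> 0.
Proof.
move=> S_cvgy QS_cvg0.
have [xs [S_xs cvg_xs]] := bilevel_limit clX cX bX LipF monF LipH smH muH_gt0
  (fun k => ybar_in_X k.+1) (fun k z => X_residual_le z k) (fun k z => SOL_residual_le z k)
  (cvg0_affine_divy S_cvgy _ _ _ QS_cvg0) (cvg0_divy S_cvgy _).
by exists xs; split => //; rewrite -cvg_shiftS.
Qed.

End BilevelExtragradient.

Theorem theorem4p4 (R : realType) (n : nat) (X : set 'rV[R]_n)
  (F H : 'rV[R]_n -> 'rV[R]_n) (LF LH muH gamma : R) (eta : nat -> R)
  (P : 'rV[R]_n -> 'rV[R]_n)
  (x y ybar : nat -> 'rV[R]_n) (Gamma theta : nat -> R) :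
  X !=set0 -> topology_structure.closed X -> vi_convex_set X -> vi_bounded_set X ->
  vi_lipschitz_on X F LF -> vi_monotone_on X F ->
  vi_lipschitz_on X H LH -> 0 < muH -> vi_strongly_monotone_on X H muH ->
  SOL X F !=set0 ->
  0 < gamma ->
  (forall k, 0 < eta k) -> (forall k, eta k.+1 <= eta k) ->
  (forall k, gamma ^+ 2 * LF ^+ 2 + gamma * eta k * muH
             + gamma ^+ 2 * eta k ^+ 2 * LH ^+ 2 <= 1 / 2) ->
  (forall z, is_proj X z (P z)) ->
  X (x 0%N) -> X (ybar 0%N) -> Gamma 0%N = 0 ->
  theta 0%N = 1 / (1 - gamma * eta 0%N * muH) ->
  (forall k, y k.+1 = P (x k - gamma *: (F (x k) + eta k *: H (x k)))) ->
  (forall k, x k.+1 = P (x k - gamma *: (F (y k.+1) + eta k *: H (y k.+1)))) ->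
  (forall k, Gamma k.+1 = Gamma k + eta k * theta k) ->
  (forall k, ybar k.+1 =
     (Gamma k.+1)^-1 *: (Gamma k *: ybar k + (eta k * theta k) *: y k.+1)) ->
  (forall k, theta k.+1 = theta k / (1 - gamma * eta k.+1 * muH)) ->
  (* (i) *)
  (forall K : nat, (1 <= K)%N ->
     - BH X F H * dist (ybar K) (SOL X F) <= Gap (ybar K) (SOL X F) H /\
     Gap (ybar K) (SOL X F) H
       <= gamma^-1 * DX2 X / (\sum_(j < K) eta j * theta j)) /\
  (* (ii) *)
  (forall K : nat, (1 <= K)%N ->
     0 <= Gap (ybar K) X F /\
     Gap (ybar K) X F
       <= (gamma^-1 * eta 0%N * DX2 X
           + CH X H * Num.sqrt 2 * DX X * (\sum_(j < K) eta j ^+ 2 * theta j))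
          / (\sum_(j < K) eta j * theta j)) /\
  (* (iii) *)
  ((fun k => \sum_(j < k.+1) eta j * theta j) @ \oo --> +oo ->
   (fun k => (\sum_(j < k.+1) eta j ^+ 2 * theta j)
             / (\sum_(j < k.+1) eta j * theta j)) @ \oo --> (0 : R) ->
   exists xs : 'rV[R]_n,
     SOL (SOL X F) H = [set xs] /\
     (fun k => enorm (ybar k - xs)) @ \oo --> (0 : R)).
Proof.
move=> *; split; [|split].
- by apply: SOL_gap_bounds; eassumption.
- by apply: X_gap_bounds; eassumption.
- by apply: ybar_cvg_bilevel_SOL; eassumption.
Qed.
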